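(* Let $A$ be a circular $m\times n$ matrix and let $b\in\mathbb{Z}_+^m$. Then $Q^*(A,b)$ is equal to the set of points $x\in\mathbb{R}^n$ satisfying $Ax\ge b$, $x\ge 0$, and all $\Gamma$-inequalities (with respect to $b$) for the circuits $\Gamma$ of $D(A)$ such that $p(\Gamma)\ge 2$ and $p(\Gamma)$ does not divide $t(\Gamma,b)$.
   Context: Notation: $[n]=\{1,\dots,n\}$ with addition modulo $n$ (index $0$ is identified with $n$). For $a,c\in[n]$, let $t\ge 0$ be minimal with $a+t\equiv c \pmod n$; then $[a,c]_n=\{a,a+1,\dots,a+t\}$ (mod $n$), $[a,c)_n=[a,c]_n\setminus\{c\}$, $(a,c]_n=[a,c]_n\setminus\{a\}$, $(a,c)_n=[a,c]_n\setminus\{a,c\}$. An $m\times n$ $\{0,1\}$-matrix $A$ (rows indexed by $[m]$, columns by $[n]$) is circular if for each row $i$ there are $\ell_i\in[n]$ and an integer $k_i$ with $2\le k_i\le n-1$ such that row $i$ is the incidence vector of $[\ell_i,\ell_i+k_i)_n$. For $b\in\mathbb{Z}_+^m$: $Q(A,b)=\{x\in\mathbb{R}^n: Ax\ge b,\ x\ge 0\}$ and $Q^*(A,b)=\operatorname{conv}(Q(A,b)\cap\mathbb{Z}^n)$. The digraph $D(A)$ (multigraph allowed) has node set $[n]$ (node labels mod $n$) and four arc sets: forward row arcs $a_i=(\ell_i-1,\ell_i+k_i-1)$, $i\in[m]$; forward short arcs $a_{m+j}=(j-1,j)$, $j\in[n]$; reverse row arcs $\bar a_i=(\ell_i+k_i-1,\ell_i-1)$,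 $i\in[m]$; reverse short arcs $\bar a_{m+j}=(j,j-1)$, $j\in[n]$. Lengths: $l(a_i)=k_i$, $l(\bar a_i)=-k_i$, forward short arcs have length $1$, reverse short arcs length $-1$. A circuit is a simple directed circuit; for a closed directed path $\Gamma$, its winding number $p(\Gamma)$ is the integer with $p(\Gamma)\,n=\sum_{a\in E(\Gamma)}l(a)$. A forward row arc $a_i$ jumps over node $j$ iff $j\in[\ell_i,\ell_i+k_i)_n$; the forward short arc $(j-1,j)$ jumps over node $j$ only; a reverse arc $\bar a_k$ jumps over $j$ iff $a_k$ does. $p^-(\Gamma,j)$ is the number of reverse arcs of $\Gamma$ jumping over $j$. For a circuit $\Gamma$: $t(\Gamma,b)=\sum_{i\in[m]:a_i\in E(\Gamma)}b_i-\sum_{i\in[m]:\bar a_i\in E(\Gamma)}b_i$; if $p(\Gamma)\neq 0$, $\beta(\Gamma,b)=\lfloor t(\Gamma,b)/p(\Gamma)\rfloor$, $r(\Gamma,b)=t(\Gamma,b)-\beta(\Gamma,b)p(\Gamma)$, and the $\Gamma$-inequality is $\sum_{j\in[n]}[p^-(\Gamma,j)+r(\Gamma,b)]x_j\ge r(\Gamma,b)(\beta(\Gamma,b)+1)+\sum_{i\in[m]:\bar a_i\in E(\Gamma)}b_i$. *)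

From mathcomp Require Import all_boot all_order all_algebra.
From mathcomp Require Import reals.
Set Implicit Arguments.
Unset Strict Implicit.
Unset Printing Implicit Defensive.
Import Order.TTheory GRing.Theory Num.Theory.
Local Open Scope ring_scope.

(* Convention: the paper's index j in [n] = {1,..,n} (taken mod n) is
   represented by the ordinal (j mod n) : 'I_n, i.e. paper index n <-> 0.
   Nodes of D(A) are represented by naturals in [0,n).                    *)

(* Arcs of the multigraph D(A): forward row arc a_i, forward short arc
   a_{m+j}, reverse row arc bar a_i, reverse short arc bar a_{m+j}.       *)
Inductive darc (m n : nat) : Type :=
| FRow of 'I_m | FShort of 'I_n | RRow of 'I_m | RShort of 'I_n.

Section Digraph.
Variables (m n : nat) (l : 'I_m -> 'I_n) (k : 'I_m -> nat).

Definition in_row (i : 'I_m) (j : 'I_n) : bool := (((j + n - l i) %% n) < k i)%N.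

Definition arc_tail (a : darc m n) : nat :=
  match a with
  | FRow i => ((l i + n - 1) %% n)%N
  | FShort j => ((j + n - 1) %% n)%N
  | RRow i => ((l i + k i + n - 1) %% n)%N
  | RShort j => nat_of_ord j
  end.

Definition arc_head (a : darc m n) : nat :=
  match a with
  | FRow i => ((l i + k i + n - 1) %% n)%N
  | FShort j => nat_of_ord j
  | RRow i => ((l i + n - 1) %% n)%N
  | RShort j => ((j + n - 1) %% n)%N
  end.

Definition arc_len (a : darc m n) : int :=
  match a with
  | FRow i => (k i)%:Z
  | FShort _ => 1
  | RRow i => - (k i)%:Z
  | RShort _ => -1
  end.

Definition is_rev (a : darc m n) : bool :=
  match a with RRow _ | RShort _ => true | _ => false end.

Definition jumps (a : darc m n) (j : 'I_n) : bool :=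
  match a with
  | FRow i | RRow i => in_row i j
  | FShort j' | RShort j' => j == j'
  end.

(* simple directed circuit, given as the cyclic sequence of its arcs:
   head(e_t) = tail(e_{t+1}) cyclically, and no node is visited twice *)
Definition circuit (s : seq (darc m n)) : Prop :=
  s <> [::] /\ uniq (map arc_tail s) /\ map arc_head s = rot 1 (map arc_tail s).

(* winding number: p(Gamma) * n = total length *)
Definition wind (s : seq (darc m n)) : int :=
  ((\sum_(a <- s) arc_len a) %/ (n%:Z))%Z.

Definition arc_b (b : 'I_m -> nat) (a : darc m n) : int :=
  match a with
  | FRow i => (b i)%:Z
  | RRow i => - (b i)%:Z
  | _ => 0
  end.

Definition t_gamma (b : 'I_m -> nat) (s : seq (darc m n)) : int :=
  \sum_(a <- s) arc_b b a.

Definition beta_gamma (b : 'I_m -> nat) (s : seq (darc m n)) : int :=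
  Num.floor ((t_gamma b s)%:~R / (wind s)%:~R : rat).

Definition r_gamma (b : 'I_m -> nat) (s : seq (darc m n)) : int :=
  t_gamma b s - beta_gamma b s * wind s.

Definition pminus (s : seq (darc m n)) (j : 'I_n) : nat :=
  count (fun a => is_rev a && jumps a j) s.

Definition rev_b (b : 'I_m -> nat) (s : seq (darc m n)) : int :=
  \sum_(a <- s) (match a with RRow i => (b i)%:Z | _ => 0 end).

Definition gamma_ineq (R : realType) (b : 'I_m -> nat) (s : seq (darc m n))
    (x : 'cV[R]_n) : Prop :=
  ((r_gamma b s * (beta_gamma b s + 1) + rev_b b s)%:~R : R)
    <= \sum_(j < n) ((pminus s j)%:Z + r_gamma b s)%:~R * x j 0.

Definition is_circular (R : realType) (A : 'M[R]_(m, n)) : Prop :=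
  forall i, (2 <= k i <= n - 1)%N /\
            forall j, A i j = (if in_row i j then 1 else 0).

End Digraph.

Section Polyhedra.
Variables (R : realType) (m n : nat).

Definition inQ (A : 'M[R]_(m, n)) (b : 'I_m -> nat) (x : 'cV[R]_n) : Prop :=
  (forall i, (b i)%:R <= (A *m x) i 0) /\ (forall j, 0 <= x j 0).

Definition is_int_vec (x : 'cV[R]_n) : Prop :=
  forall j, exists z : int, x j 0 = z%:~R.

Definition conv_hull (S : 'cV[R]_n -> Prop) (x : 'cV[R]_n) : Prop :=
  exists (N : nat) (pts : 'I_N -> 'cV[R]_n) (lam : 'I_N -> R),
    (forall t, 0 <= lam t) /\ \sum_t lam t = 1 /\ (forall t, S (pts t)) /\
    x = \sum_t lam t *: pts t.

Definition inQstar (A : 'M[R]_(m, n)) (b : 'I_m -> nat) (x : 'cV[R]_n) : Prop :=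
  conv_hull (fun y => inQ A b y /\ is_int_vec y) x.

End Polyhedra.

(* Let f(z) = x_1 + ... + x_z be the partial sums of x (indices mod n), a function on the
   unrolled line N with f(z + n) = f(z) + sum x.  Then x >= 0 and Ax >= b say that f
   increases by at least 0 along every short arc and by at least b_i along every row arc
   a_i of D(A).

   If sum x is an integer, f = (1 - phi) floor(f) + phi (floor(f) + frac(f) / phi), with phi
   the largest fractional part of f, is a convex combination of two such functions, the
   second one with fewer non-integral values; by induction x lies in Q*(A,b).

   Otherwise sum x = T0 + lam with 0 < lam < 1, and it suffices to split
   x = (1 - lam) z + lam w with z, w in Q(A,b), sum z = T0 and sum w = T0 + 1.  For the
   partial sums u of (1 - lam) z this is a system of difference constraints along the arcs
   of D(A), forward arcs for z and reverse arcs for w, with period (1 - lam) T0; by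
   Bellman-Ford it is solvable iff no circuit has positive weight.  By Ax >= b alone the
   weight of a circuit G is nonpositive unless T0 p(G) < t(G,b) < (T0 + 1) p(G); then
   p(G) >= 2, p(G) does not divide t(G,b), beta(G,b) = T0, and nonpositivity is exactly the
   G-inequality.  Conversely, G-inequalities hold at integral points of Q(A,b) because
   there sum x is an integer, so it does not lie strictly between beta and beta + 1. *)

From HB Require Import structures.
From mathcomp Require Import all_boot all_order all_algebra.
From mathcomp Require Import reals.
From mathcomp Require Import zify ring lra.
Set Implicit Arguments.
Unset Strict Implicit.
Unset Printing Implicit Defensive.
Import Order.TTheory GRing.Theory Num.Theory.
Local Open Scope ring_scope.

Section Potentials.
Variables (R : realDomainType) (T : finType) (tail head : T -> nat) (n : nat).
Variable w : T -> R.
Hypothesis tail_lt : forall a, (tail a < n)%N.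

Definition simple_cycle (c : seq T) : Prop :=
  c <> [::] /\ uniq (map tail c) /\ map head c = rot 1 (map tail c).

Hypothesis no_positive_cycle : forall c, simple_cycle c -> \sum_(a <- c) w a <= 0.

Fixpoint walk (x : nat) (s : seq T) : bool :=
  if s is a :: s' then (tail a == x) && walk (head a) s' else true.

Definition walk_end (x : nat) (s : seq T) : nat := last x (map head s).

Definition weight (s : seq T) : R := \sum_(a <- s) w a.

Lemma walk_cat x s1 s2 : walk x (s1 ++ s2) = walk x s1 && walk (walk_end x s1) s2.
Proof. by elim: s1 x => [|a s1 IH] x //=; rewrite IH andbA. Qed.

Lemma walk_end_cat x s1 s2 : walk_end x (s1 ++ s2) = walk_end (walk_end x s1) s2.
Proof. by rewrite /walk_end map_cat last_cat. Qed.

Lemma walk_rcons x s a :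
  walk x (rcons s a) = walk x s && (tail a == walk_end x s).
Proof. by rewrite -cats1 walk_cat /= andbT. Qed.

Lemma walk_end_rcons x s a : walk_end x (rcons s a) = head a.
Proof. by rewrite /walk_end map_rcons last_rcons. Qed.

Lemma weight_rcons s a : weight (rcons s a) = weight s + w a.
Proof. by rewrite /weight -cats1 big_cat big_seq1. Qed.

Lemma walk_heads x a p : walk x (a :: p) ->
  map head (a :: p) = rcons (map tail p) (walk_end x (a :: p)).
Proof.
elim: p x a => [|c p IH] x a //= /andP[_ /andP[/eqP hc hp]].
have := IH (head a) c; rewrite /= -hc eqxx hp => /(_ isT) ->.
by rewrite hc.
Qed.

(* Closed subwalks are simple cycles, so cutting them off does not decrease the weight. *)
Lemma walk_shorten x s : walk x s -> exists s',
  [/\ walk x s', uniq (map tail s'), walk_end x s' = walk_end x s & weight s <= weight s'].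
Proof.
elim: s x => [|a s IH] x; first by exists [::].
case/andP=> /eqP ha /IH[s' [ws' us' es' les']].
have [xs'|xs'] := boolP (x \in map tail s'); last first.
  exists (a :: s'); split; rewrite /= ?ha ?eqxx ?xs' //.
  by rewrite /weight !big_cons lerD2l.
pose i := index x (map tail s').
have [p [c [q [def_s' tc xp]]]] : exists p c q,
    [/\ s' = p ++ c :: q, tail c = x & x \notin map tail p].
  have hi : (i < size s')%N by rewrite -(size_map tail) index_mem.
  exists (take i s'), (nth a s' i), (drop i.+1 s'); split.
  - by rewrite -drop_nth // cat_take_drop.
  - by rewrite -(nth_map a 0) // nth_index.
  - by rewrite map_take in_take ?index_mem // ltnn.
move: ws' us' es'; rewrite def_s' walk_cat => /andP[wp /= /andP[/eqP endp wq]].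
rewrite map_cat cat_uniq => /and3P[up _ ucq] es'.
have cyc : \sum_(e <- a :: p) w e <= 0.
  have wap : walk x (a :: p) by rewrite /= ha eqxx.
  apply: no_positive_cycle; split=> //; split; first by rewrite /= ha xp.
  by rewrite (walk_heads wap) /= ha rot1_cons -tc endp.
exists (c :: q); split=> //; first by rewrite /= tc eqxx.
- by rewrite -[walk_end x (a :: s)]/(walk_end (head a) s) -es' walk_end_cat -endp tc.
- move: les'; rewrite def_s' /weight !big_cons big_cat /= big_cons in cyc *; lra.
Qed.

Lemma simple_walk_size s : uniq (map tail s) -> (size s <= n)%N.
Proof.
move=> us; rewrite -(size_map tail) -(size_iota 0 n); apply: uniq_leq_size => // y.
by case/mapP=> a _ ->; rewrite mem_iota add0n tail_lt.
Qed.

(* The largest weight of a walk with at most [N] arcs ending in [j] (Bellman-Ford). *)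
Fixpoint heaviest (N : nat) (j : nat) : R :=
  if N is N'.+1 then
    \big[Num.max/heaviest N' j]_(a | head a == j) (heaviest N' (tail a) + w a)
  else 0.

Lemma heaviest_ge0 N j : 0 <= heaviest N j.
Proof. by elim: N j => //= N IH j; apply: le_trans (IH j) (bigmax_ge_id _ _ _ _). Qed.

Lemma walk_le_heaviest N x s :
  walk x s -> (size s <= N)%N -> weight s <= heaviest N (walk_end x s).
Proof.
elim: N s => [|N IH] s; first by case: s => // _ _; rewrite /weight big_nil.
case/lastP: s => [_ _|s a]; first by rewrite /weight big_nil heaviest_ge0.
rewrite walk_rcons size_rcons ltnS => /andP[ws /eqP ta] sN.
rewrite walk_end_rcons weight_rcons /=.
apply: le_trans (le_bigmax_cond _ _ (eqxx (head a))); rewrite ta lerD2r.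
exact: IH.
Qed.

Lemma heaviest_walk N j : exists x s,
  [/\ walk x s, (size s <= N)%N, walk_end x s = j & heaviest N j = weight s].
Proof.
elim: N j => [|N IH] j; first by exists j, [::]; rewrite /weight big_nil.
rewrite /=; apply: (big_rec (fun M => exists x s, [/\ walk x s, (size s <= N.+1)%N,
  walk_end x s = j & M = weight s])) => [|a M ha [x [s [ws sN es ->]]]].
  have [x [s [ws sN es ->]]] := IH j.
  by exists x, s; split=> //; apply: leqW.
have [x' [s' [ws' s'N es' ->]]] := IH (tail a).
rewrite maxEle; case: ifP => _; first by exists x, s.
exists x', (rcons s' a); split.
- by rewrite walk_rcons ws' es' eqxx.
- by rewrite size_rcons ltnS.
- by rewrite walk_end_rcons (eqP ha).
- by rewrite weight_rcons.
Qed.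

Lemma potential_of_no_positive_cycle :
  exists v : nat -> R, forall a, w a <= v (head a) - v (tail a).
Proof.
exists (heaviest n) => a.
have [x [s [ws sn es hs]]] := heaviest_walk n (tail a).
have wsa : walk x (rcons s a) by rewrite walk_rcons ws es eqxx.
have [s' [ws' us' es' le_s']] := walk_shorten wsa.
have := walk_le_heaviest ws' (simple_walk_size us').
rewrite es' walk_end_rcons; move: le_s'; rewrite weight_rcons -hs; lra.
Qed.

End Potentials.

Section ConvexHull.
Variables (R : realType) (n : nat) (S : 'cV[R]_n -> Prop).

Lemma conv_hull_point p : S p -> conv_hull S p.
Proof. by move=> Sp; exists 1%N, (fun _ => p), (fun _ => 1); rewrite !big_ord1 scale1r. Qed.

Lemma conv_hull_segment p q mu : conv_hull S p -> conv_hull S q ->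
  0 <= mu <= 1 -> conv_hull S ((1 - mu) *: p + mu *: q).
Proof.
move=> [N1 [pp [lp [lp0 [lp1 [Spp ->]]]]]] [N2 [qq [lq [lq0 [lq1 [Sqq ->]]]]]].
case/andP=> mu0 mu1.
pose pts t := match split t with inl i => pp i | inr j => qq j end.
pose lam t := match split t with inl i => (1 - mu) * lp i | inr j => mu * lq j end.
have sl (i : 'I_N1) : split (lshift N2 i) = inl i := unsplitK (inl i).
have sr (j : 'I_N2) : split (rshift N1 j) = inr j := unsplitK (inr j).
exists (N1 + N2)%N, pts, lam; split; [|split; [|split]].
- move=> t; rewrite /lam; case: (split t) => ?; apply: mulr_ge0; rewrite ?subr_ge0 //.
- rewrite big_split_ord (eq_bigr (fun i => (1 - mu) * lp i)) => [|i _]; last first.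
    by rewrite /lam sl.
  rewrite [X in _ + X = _](eq_bigr (fun j => mu * lq j)) => [|j _]; last by rewrite /lam sr.
  by rewrite -!mulr_sumr lp1 lq1 !mulr1 subrK.
- by move=> t; rewrite /pts; case: (split t).
- rewrite big_split_ord !scaler_sumr; congr (_ + _); apply: eq_bigr => i _.
  + by rewrite /lam /pts sl scalerA.
  + by rewrite /lam /pts sr scalerA.
Qed.

Lemma conv_hull_ineq (c : 'I_n -> R) (lhs : R) x : conv_hull S x ->
  (forall y, S y -> lhs <= \sum_j c j * y j 0) -> lhs <= \sum_j c j * x j 0.
Proof.
move=> [N [pts [lam [lam0 [lam1 [Spts ->]]]]]] Sc.
have -> : \sum_j c j * (\sum_t lam t *: pts t) j 0 = \sum_t lam t * \sum_j c j * pts t j 0.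
  under eq_bigr do rewrite summxE mulr_sumr.
  rewrite exchange_big /=; apply: eq_bigr => t _; rewrite mulr_sumr.
  by apply: eq_bigr => j _; rewrite mxE mulrCA.
rewrite -[lhs]mul1r -lam1 mulr_suml.
by apply: ler_sum => t _; apply: ler_wpM2l => //; apply: Sc.
Qed.

End ConvexHull.

Lemma inQstar_inQ (R : realType) m n (A : 'M[R]_(m, n)) b x :
  inQstar A b x -> inQ A b x.
Proof.
move=> Ax; split=> [i|j].
  rewrite mxE; apply: (conv_hull_ineq Ax) => y [[Ay _] _].
  by have := Ay i; rewrite mxE.
have coord y : y j 0 = \sum_j' (j' == j)%:R * y j' 0.
  by rewrite (bigD1 j) //= eqxx mul1r big1 ?addr0 // => j' /negbTE ->; rewrite mul0r.
rewrite coord; apply: (conv_hull_ineq Ax).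
by move=> y [[_ y0] _]; rewrite -coord.
Qed.

Section Rounding.
Variable R : archiRealFieldType.
Implicit Types x y phi : R.

Definition frac (x : R) : R := x - (Num.floor x)%:~R.

Definition round_up (phi x : R) : R := (Num.floor x)%:~R + frac x / phi.

Lemma frac_ge0 x : 0 <= frac x.
Proof. by rewrite subr_ge0 floor_le. Qed.

Lemma frac_lt1 x : frac x < 1.
Proof. by have := floorD1_gt x; rewrite /frac rmorphD /=; lra. Qed.

Lemma frac_eq0 x : (frac x == 0) = (x \is a Num.int).
Proof. by rewrite subr_eq0 eq_sym intrEfloor. Qed.

Lemma floorDz x (c : int) : Num.floor (x + c%:~R) = Num.floor x + c.
Proof. by rewrite floorDrz ?intr_int // intrKfloor. Qed.

Lemma fracDz x (c : int) : frac (x + c%:~R) = frac x.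
Proof. by rewrite /frac floorDz rmorphD /=; ring. Qed.

Lemma floor_incr_ge x y (c : int) :
  c%:~R <= y - x -> c%:~R <= (Num.floor y)%:~R - (Num.floor x)%:~R :> R.
Proof.
rewrite lerBrDr addrC => /le_floor; rewrite floorDz => le_c.
by rewrite lerBrDr -rmorphD ler_int addrC.
Qed.

(* Either the integer parts of [x] and [y] differ by more than [c], or by exactly [c] and
   then the fractional parts are ordered. *)
Lemma round_up_incr_ge x y (c : int) phi : c%:~R <= y - x -> 0 < phi ->
  frac x <= phi -> frac y <= phi -> c%:~R <= round_up phi y - round_up phi x.
Proof.
move=> le_xy phi_gt0 fx fy; rewrite /round_up.
have fx1 : frac x / phi <= 1 by rewrite ler_pdivrMr // mul1r.
have fy0 : 0 <= frac y / phi by rewrite divr_ge0 ?frac_ge0 ?ltW.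
have [eq_fl|ne_fl] := eqVneq (Num.floor y) (Num.floor x + c).
  have le_frac : frac x <= frac y by move: le_xy; rewrite /frac eq_fl rmorphD /=; lra.
  suff : frac x / phi <= frac y / phi by rewrite eq_fl rmorphD /=; lra.
  by rewrite ler_pM2r // invr_gt0.
have : (Num.floor x + c + 1 <= Num.floor y)%R.
  move: le_xy; rewrite lerBrDr addrC => /le_floor; rewrite floorDz.
  by rewrite le_eqVlt eq_sym (negbTE ne_fl) lezD1.
rewrite -(ler_int R) !rmorphD /=; lra.
Qed.

End Rounding.

(* For a circuit, [F] and [S] sum x over the columns jumped by its forward and reverse arcs,
   [Bf] and [Rb] sum the corresponding b_i, [p] is its winding number and [t] = t(G,b). *)
Section GammaArithmetic.
Variable R : realFieldType.

Lemma gamma_valid_arith (p t beta T F S Bf Rb : R) :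
  F - S = p * T -> Bf <= F -> Rb <= S -> t = Bf - Rb ->
  beta * p <= t < (beta + 1) * p -> T <= beta \/ beta + 1 <= T ->
  (t - beta * p) * (beta + 1) + Rb <= S + (t - beta * p) * T.
Proof.
move=> FS BF RS tE /andP[lo hi] [T_le|T_ge].
  have : 0 <= (p - (t - beta * p)) * (beta - T) by apply: mulr_ge0; lra.
  nra.
have : 0 <= (t - beta * p) * (T - (beta + 1)) by apply: mulr_ge0; lra.
nra.
Qed.

Lemma circuit_split_arith (p t T0 lam F S Bf Rb : R) :
  F - S = p * (T0 + lam) -> 0 <= lam < 1 -> Bf <= F -> Rb <= S -> t = Bf - Rb ->
  (T0 * p < t < (T0 + 1) * p ->
     (t - T0 * p) * (T0 + 1) + Rb <= S + (t - T0 * p) * (T0 + lam)) ->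
  lam * Rb - S + (1 - lam) * Bf <= p * ((1 - lam) * T0).
Proof.
move=> FS /andP[lam0 lam1] BF RS tE middle.
have [t_le|t_gt] := lerP t (T0 * p).
  have : 0 <= (1 - lam) * (T0 * p - t) by apply: mulr_ge0; lra.
  nra.
have [t_ge|t_lt] := lerP ((T0 + 1) * p) t.
  have : 0 <= lam * (t - (T0 + 1) * p) by apply: mulr_ge0; lra.
  nra.
by move: middle; rewrite t_gt t_lt => /(_ isT); nra.
Qed.

End GammaArithmetic.

Definition darc_code m n (a : darc m n) : ('I_m + 'I_n) + ('I_m + 'I_n) :=
  match a with
  | FRow i => inl (inl i) | FShort j => inl (inr j)
  | RRow i => inr (inl i) | RShort j => inr (inr j)
  end.

Definition darc_decode m n (c : ('I_m + 'I_n) + ('I_m + 'I_n)) : darc m n :=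
  match c with
  | inl (inl i) => FRow n i | inl (inr j) => FShort m j
  | inr (inl i) => RRow n i | inr (inr j) => RShort m j
  end.

Lemma darc_codeK m n : cancel (@darc_code m n) (@darc_decode m n).
Proof. by case. Qed.

HB.instance Definition _ m n := Finite.copy (darc m n) (can_type (@darc_codeK m n)).

Section ArcIncrements.
Variables (R : comPzRingType) (m n : nat) (l : 'I_m -> 'I_n) (k : 'I_m -> nat).
Hypothesis n_gt0 : (0 < n)%N.
Hypothesis k_le : forall i, (k i <= n)%N.

Definition qperiodic (f : nat -> R) (Y : R) : Prop := forall z, f (z + n)%N = f z + Y.

(* On the unrolled line, arc [a] spans [arc_lo a, arc_hi a] and jumps over the columns
   arc_lo a + 1, ..., arc_hi a (mod n); [arc_delta] signs the increase of f along it by the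
   orientation of [a], and [arc_wraps a] counts, with that sign, the multiples of n it
   passes, which add up to the winding number along a circuit. *)
Definition arc_lo (a : darc m n) : nat :=
  match a with
  | FRow i | RRow i => ((l i + n - 1) %% n)%N
  | FShort j | RShort j => ((j + n - 1) %% n)%N
  end.

Definition arc_span (a : darc m n) : nat :=
  match a with FRow i | RRow i => k i | _ => 1%N end.

Definition arc_hi (a : darc m n) : nat := (arc_lo a + arc_span a)%N.

Definition arc_incr (f : nat -> R) (a : darc m n) : R := f (arc_hi a) - f (arc_lo a).

Definition arc_delta (f : nat -> R) (a : darc m n) : R :=
  if is_rev a then - arc_incr f a else arc_incr f a.

Definition arc_wraps (a : darc m n) : int :=
  (if is_rev a then -1 else 1) * (arc_hi a %/ n)%N%:Z.

Lemma arc_loE a : arc_lo a = if is_rev a then arc_head l k a else arc_tail l k a.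
Proof. by case: a. Qed.

Lemma arc_hi_mod a :
  (arc_hi a %% n)%N = if is_rev a then arc_tail l k a else arc_head l k a.
Proof.
rewrite /arc_hi; case: a => [i|j|i|j] /=; rewrite modnDml //.
- by congr (_ %% _)%N; lia.
- by rewrite subnK ?modnDr ?modn_small //; lia.
- by congr (_ %% _)%N; lia.
- by rewrite subnK ?modnDr ?modn_small //; lia.
Qed.

Lemma qperiodic_iter f Y z q : qperiodic f Y -> f (z + q * n)%N = f z + q%:R * Y.
Proof.
move=> fY; elim: q => [|q IH]; first by rewrite mul0n addn0 mul0r addr0.
by rewrite mulSn addnCA addnC fY IH mulrSr; ring.
Qed.

Lemma qperiodic_mod f Y z : qperiodic f Y -> f z = f (z %% n)%N + (z %/ n)%:R * Y.
Proof. by move=> fY; rewrite -qperiodic_iter // addnC -divn_eq. Qed.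

Lemma arc_delta_qperiodic f Y a : qperiodic f Y ->
  arc_delta f a = f (arc_head l k a) - f (arc_tail l k a) + (arc_wraps a)%:~R * Y.
Proof.
move=> fY; rewrite /arc_delta /arc_incr /arc_wraps (qperiodic_mod (arc_hi a) fY).
rewrite arc_hi_mod arc_loE; case: is_rev; rewrite ?mul1r ?mulN1r ?rmorphN /= pmulrn.
all: ring.
Qed.

Lemma arc_len_wraps a :
  arc_len k a = (arc_head l k a)%:Z - (arc_tail l k a)%:Z + arc_wraps a * n%:Z.
Proof.
have e := divn_eq (arc_hi a) n; rewrite arc_hi_mod {1}/arc_hi arc_loE in e.
rewrite /arc_wraps; move: (arc_hi a %/ n)%N e => q.
by case: a => [i|j|i|j] /= e; nia.
Qed.

Lemma sum_head_sub_tail (V : zmodType) (g : nat -> V) (s : seq (darc m n)) :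
  circuit l k s -> \sum_(a <- s) (g (arc_head l k a) - g (arc_tail l k a)) = 0.
Proof.
case=> _ [_ e]; rewrite sumrB -(big_map (arc_head l k) xpredT g) e.
have rot_perm : perm_eq (rot 1 (map (arc_tail l k) s)) (map (arc_tail l k) s).
  by rewrite perm_rot.
by rewrite (perm_big _ rot_perm) big_map subrr.
Qed.

Lemma wind_circuit s : circuit l k s -> wind k s = \sum_(a <- s) arc_wraps a.
Proof.
move=> sc; rewrite /wind (eq_bigr _ (fun a _ => arc_len_wraps a)) big_split /=.
rewrite (sum_head_sub_tail (fun z => z%:Z) sc) add0r -mulr_suml mulzK //.
by rewrite eqz_nat -lt0n.
Qed.

Lemma arc_delta_circuit f Y s : circuit l k s -> qperiodic f Y ->
  \sum_(a <- s) arc_delta f a = (wind k s)%:~R * Y.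
Proof.
move=> sc fY; rewrite (eq_bigr _ (fun a _ => arc_delta_qperiodic a fY)) big_split /=.
by rewrite (sum_head_sub_tail f sc) add0r (wind_circuit sc) rmorph_sum mulr_suml.
Qed.

Definition col_of (z : nat) : 'I_n := Ordinal (ltn_pmod z n_gt0).

(* The shift by n avoids the truncated predecessor of column 0. *)
Definition diff_col (f : nat -> R) : 'cV[R]_n := \col_c (f (c + n)%N - f (c + n).-1).

Definition jumped_sum (a : darc m n) (y : 'cV[R]_n) : R :=
  \sum_(j | jumps l k a j) y j 0.

Definition partial_sum (x : 'cV[R]_n) (z : nat) : R :=
  \sum_(0 <= i < z) x (col_of i.+1) 0.

Lemma qperiodic_step f Y z : qperiodic f Y -> f z.+1 - f z = diff_col f (col_of z.+1) 0.
Proof.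
move=> fY; rewrite mxE /=.
have e1 : (z.+1 + n = (z.+1 %% n + n) + z.+1 %/ n * n)%N.
  by have := divn_eq z.+1 n; lia.
have e2 : (z + n = (z.+1 %% n + n).-1 + z.+1 %/ n * n)%N.
  by move: e1; rewrite addSn; case: (z.+1 %% n + n)%N => //=; lia.
have := fY z.+1; have := fY z; rewrite e1 e2 !(qperiodic_iter _ _ fY) => h1 h2.
have -> : f z.+1 - f z = (f z.+1 + Y) - (f z + Y) by ring.
by rewrite -h1 -h2; ring.
Qed.

Lemma qperiodic_telescope f Y z K : qperiodic f Y ->
  f (z + K)%N - f z = \sum_(d < K) diff_col f (col_of (z + d).+1) 0.
Proof.
move=> fY; elim: K => [|K IH]; first by rewrite addn0 big_ord0 subrr.
by rewrite big_ord_recr /= -IH addnS -(qperiodic_step _ fY); ring.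
Qed.

Lemma sum_col_of_shift (V : nmodType) (F : 'I_n -> V) c :
  \sum_j F j = \sum_(d < n) F (col_of (c + d)).
Proof.
apply: reindex_inj => d1 d2 /(congr1 val) /= /eqP.
by rewrite eqn_modDl !modn_small // => /eqP /val_inj.
Qed.

Definition arc_col (a : darc m n) : nat :=
  match a with FRow i | RRow i => l i | FShort j | RShort j => j end.

Lemma col_of_loS a d : col_of (arc_lo a + d).+1 = col_of (arc_col a + d).
Proof.
apply: val_inj => /=; rewrite -addn1 -addnA.
by case: a => * /=; rewrite modnDml -[in RHS](modnDr _ n); congr (_ %% _)%N; lia.
Qed.

Lemma jumps_col_of a (d : 'I_n) :
  jumps l k a (col_of (arc_col a + d)) = (d < arc_span a)%N.
Proof.
have [row_d short_d] : (forall i, in_row l k i (col_of (l i + d)) = (d < k i)%N) /\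
    (forall j : 'I_n, (col_of (j + d) == j) = (d < 1)%N).
  split=> [i|j].
    rewrite /in_row /=; congr (_ < _)%N; apply/eqP.
    rewrite -(modn_small (ltn_ord d)) -(eqn_modDr (l i)) subnK; last first.
      by rewrite (leq_trans (ltnW (ltn_ord (l i)))) // leq_addl.
    by rewrite modnDml addnC modnDl (modn_small (ltn_ord d)) addnC.
  rewrite -val_eqE /= -[X in _ == X](modn_small (ltn_ord j)).
  by rewrite -[X in _ == (X %% n)%N]addn0 eqn_modDl mod0n modn_small // ltnS leqn0.
by case: a.
Qed.

Lemma arc_incr_jumped f Y a : qperiodic f Y -> arc_incr f a = jumped_sum a (diff_col f).
Proof.
move=> fY; rewrite /arc_incr /arc_hi (qperiodic_telescope _ _ fY) /jumped_sum.
rewrite [RHS]big_mkcond [RHS](sum_col_of_shift _ (arc_col a)) -[RHS]big_mkcond /=.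
rewrite (eq_bigl (fun d : 'I_n => d < arc_span a)%N) => [|d]; last exact: jumps_col_of.
have span_le : (arc_span a <= n)%N by case: a => //=.
rewrite -(big_ord_widen n (fun d => diff_col f (col_of (arc_col a + d)) 0) span_le).
by apply: eq_bigr => d _; rewrite col_of_loS.
Qed.

Lemma partial_sum_qperiodic x : qperiodic (partial_sum x) (\sum_j x j 0).
Proof.
move=> z; rewrite /partial_sum (@big_cat_nat _ _ _ z) ?leq_addr //=; f_equal.
have := big_addn 0 (z + n) z xpredT (fun i => x (col_of i.+1) 0).
rewrite add0n addKn => ->; rewrite big_mkord [RHS](sum_col_of_shift _ z.+1).
by apply: eq_bigr => d _; congr (x _ 0); apply: val_inj; rewrite /= addnC addSn.
Qed.

Lemma diff_col_partial_sum x : diff_col (partial_sum x) = x.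
Proof.
apply/matrixP => i j; rewrite (ord1 j) mxE /partial_sum.
rewrite -[in (i + n)%N](prednK (n := (i + n)%N)) ?addn_gt0 ?n_gt0 ?orbT //.
rewrite big_nat_recr //= addrAC subrr add0r prednK ?addn_gt0 ?n_gt0 ?orbT //.
by congr (x _ 0); apply: val_inj; rewrite /= modnDr modn_small.
Qed.

Lemma eq_diff_col f g : f =1 g -> diff_col f = diff_col g.
Proof. by move=> fg; apply/matrixP => i j; rewrite !mxE !fg. Qed.

Lemma diff_col_combine (c1 c2 : R) f g :
  diff_col (fun z => c1 * f z + c2 * g z) = c1 *: diff_col f + c2 *: diff_col g.
Proof. by apply/matrixP => i j; rewrite !mxE; ring. Qed.

End ArcIncrements.

Section LowerBounds.
Variables (R : realDomainType) (m n : nat) (l : 'I_m -> 'I_n) (k : 'I_m -> nat).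
Hypothesis n_gt0 : (0 < n)%N.

Lemma arc_tail_lt (a : darc m n) : (arc_tail l k a < n)%N.
Proof. by case: a => * /=; rewrite ?ltn_pmod. Qed.

Lemma arc_head_lt (a : darc m n) : (arc_head l k a < n)%N.
Proof. by case: a => * /=; rewrite ?ltn_pmod. Qed.

(* Potentials for the weights [c a - arc_wraps a * Y] on the nodes 0, ..., n - 1 extend
   quasi-periodically. *)
Lemma qperiodic_lower_bound (c : darc m n -> R) (Y : R) :
  (forall s, circuit l k s -> \sum_(a <- s) c a <= (wind k s)%:~R * Y) ->
  exists f, qperiodic n f Y /\ forall a, c a <= arc_delta l k f a.
Proof.
move=> circuit_le.
pose w a := c a - (arc_wraps l k a)%:~R * Y.
have [v vP] : exists v : nat -> R, forall a, w a <= v (arc_head l k a) - v (arc_tail l k a).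
  apply: (potential_of_no_positive_cycle (tail := arc_tail l k)) => [a|s sc].
    exact: arc_tail_lt.
  rewrite /w sumrB -mulr_suml -rmorph_sum -(wind_circuit n_gt0 sc) subr_le0.
  exact: circuit_le.
pose f z := v (z %% n)%N + (z %/ n)%:R * Y.
have fY : qperiodic n f Y.
  by move=> z; rewrite /f modnDr divnDr // divnn n_gt0 natrD mulrDl mul1r addrA.
exists f; split=> // a; rewrite (arc_delta_qperiodic l k n_gt0 a fY) /f.
rewrite !modn_small ?arc_head_lt ?arc_tail_lt // !divn_small ?arc_head_lt ?arc_tail_lt //.
by have := vP a; rewrite /w mul0r !addr0; lra.
Qed.

End LowerBounds.

Section Admissible.
Variables (R : realType) (m n : nat) (A : 'M[R]_(m, n)).
Variables (l : 'I_m -> 'I_n) (k : 'I_m -> nat) (b : 'I_m -> nat).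
Hypothesis n_gt0 : (0 < n)%N.
Hypothesis A_circular : is_circular l k A.

Lemma circular_k_le i : (k i <= n)%N.
Proof. by have [/andP[_ ?] _] := A_circular i; apply: leq_trans (leq_subr 1 n). Qed.

Definition arc_rhs (a : darc m n) : int :=
  match a with FRow i | RRow i => (b i)%:Z | _ => 0 end.

Lemma mulmx_jumped_sum (y : 'cV[R]_n) i : (A *m y) i 0 = jumped_sum l k (FRow n i) y.
Proof.
rewrite mxE /jumped_sum [RHS]big_mkcond; apply: eq_bigr => j _ /=.
by have [_ ->] := A_circular i; case: in_row; rewrite ?mul1r ?mul0r.
Qed.

Lemma jumped_sum_short (y : 'cV[R]_n) j : jumped_sum l k (FShort m j) y = y j 0.
Proof. exact: big_pred1_eq. Qed.

Lemma inQP y : inQ A b y <-> forall a, (arc_rhs a)%:~R <= jumped_sum l k a y.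
Proof.
split=> [[Ay y0] a|Ay]; last first.
  split=> [i|j]; first by rewrite mulmx_jumped_sum pmulrn; apply: (Ay (FRow n i)).
  by rewrite -jumped_sum_short; apply: (Ay (FShort m j)).
have row i : ((b i)%:Z)%:~R <= jumped_sum l k (FRow n i) y.
  by rewrite -pmulrn -mulmx_jumped_sum.
have short j : (0 : int)%:~R <= jumped_sum l k (FShort m j) y.
  by rewrite jumped_sum_short.
by case: a => [i|j|i|j]; [exact: row|exact: short|exact: row|exact: short].
Qed.

(* The partial sums of the points of Q(A,b) with coordinate sum [M]. *)
Definition admissible (f : nat -> R) (M : int) : Prop :=
  qperiodic n f M%:~R /\ forall a, (arc_rhs a)%:~R <= arc_incr l k f a.

Lemma admissible_inQ f M : admissible f M -> inQ A b (diff_col n f).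
Proof.
case=> fM rhs_le; apply/inQP => a.
by rewrite -(arc_incr_jumped l n_gt0 circular_k_le a fM).
Qed.

Lemma partial_sum_admissible x (M : int) :
  inQ A b x -> \sum_j x j 0 = M%:~R -> admissible (partial_sum n_gt0 x) M.
Proof.
move=> /inQP Ax sumM; split; first by rewrite -sumM; apply: partial_sum_qperiodic.
move=> a; rewrite (arc_incr_jumped l n_gt0 circular_k_le a (partial_sum_qperiodic n_gt0 x)).
by rewrite diff_col_partial_sum.
Qed.

Lemma admissible_floor f M :
  admissible f M -> admissible (fun z => (Num.floor (f z))%:~R) M.
Proof.
case=> fM rhs_le; split=> [z|a]; first by rewrite fM floorDz rmorphD.
exact: floor_incr_ge.
Qed.

Lemma admissible_round_up f M phi : admissible f M -> 0 < phi ->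
  (forall z, frac (f z) <= phi) -> admissible (fun z => round_up phi (f z)) M.
Proof.
case=> fM rhs_le phi_gt0 frac_le; split=> [z|a].
  by rewrite /round_up fM floorDz fracDz rmorphD /=; ring.
exact: round_up_incr_ge.
Qed.

Lemma admissible_mod f M z : admissible f M -> f z = f (z %% n)%N + ((z %/ n)%N%:Z * M)%:~R.
Proof. by case=> fM _; rewrite (qperiodic_mod z fM) rmorphM /= pmulrn. Qed.

Lemma admissible_int_inQstar f M : admissible f M ->
  (forall j : 'I_n, f j \is a Num.int) -> inQstar A b (diff_col n f).
Proof.
move=> fM f_int; apply: conv_hull_point; split; first exact: admissible_inQ fM.
have {}f_int z : f z \is a Num.int.
  rewrite (admissible_mod z fM) rpredD ?intr_int //.
  by have := f_int (col_of n_gt0 z).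
move=> j; exists (Num.floor (f (j + n)%N) - Num.floor (f (j + n).-1)).
by rewrite mxE rmorphB /= !floorK.
Qed.

(* Induction on the number of non-integral values: [f] is a convex combination of its floor
   and of a rounding with strictly fewer non-integral values. *)
Lemma admissible_inQstar f M : admissible f M -> inQstar A b (diff_col n f).
Proof.
have [N] := ubnP #|[pred j : 'I_n | f j \isn't a Num.int]|.
elim: N f M => // N IH f M card_lt fM.
have [j0 /= j0_nonint|int_f] := pickP [pred j : 'I_n | f j \isn't a Num.int]; last first.
  by apply: admissible_int_inQstar fM _ => j; apply/negbFE/int_f.
pose j1 := [arg max_(j > j0) frac (f j)]%O.
pose phi := frac (f j1).
have phi_max (j : 'I_n) : frac (f j) <= phi by rewrite /phi /j1; case: arg_maxP => // i _; apply.
have phi_gt0 : 0 < phi.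
  by apply: lt_le_trans (phi_max j0); rewrite lt0r frac_ge0 frac_eq0 j0_nonint.
have frac_le z : frac (f z) <= phi.
  by rewrite (admissible_mod z fM) fracDz; exact: (phi_max (col_of n_gt0 z)).
have -> : diff_col n f = (1 - phi) *: diff_col n (fun z => (Num.floor (f z))%:~R)
    + phi *: diff_col n (fun z => round_up phi (f z)).
  rewrite -diff_col_combine; apply: eq_diff_col => z.
  by rewrite /round_up /frac; field; rewrite gt_eqF.
apply: conv_hull_segment.
- apply: admissible_int_inQstar (admissible_floor fM) _ => j; exact: intr_int.
- apply: IH (admissible_round_up fM phi_gt0 frac_le); rewrite -ltnS.
  apply: leq_trans card_lt; apply: proper_card; apply/properP; split.
    apply/subsetP => j; rewrite !inE; apply: contraNN => f_int.
    by move: f_int; rewrite -frac_eq0 /round_up => /eqP ->; rewrite mul0r addr0 intr_int.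
  exists j1; rewrite !inE; first by rewrite -frac_eq0 gt_eqF.
  by rewrite negbK /round_up divff ?gt_eqF // -[1]/(1%:~R) -rmorphD intr_int.
- by rewrite ltW //= ltW ?frac_lt1.
Qed.

End Admissible.

Section Gamma.
Variables (R : realType) (m n : nat) (A : 'M[R]_(m, n)).
Variables (l : 'I_m -> 'I_n) (k : 'I_m -> nat) (b : 'I_m -> nat).
Hypothesis n_gt0 : (0 < n)%N.
Hypothesis A_circular : is_circular l k A.
Implicit Types (s : seq (darc m n)) (x y : 'cV[R]_n).

Definition fwd_load s y : R := \sum_(a <- s | ~~ is_rev a) jumped_sum l k a y.
Definition rev_load s y : R := \sum_(a <- s | is_rev a) jumped_sum l k a y.
Definition fwd_rhs s : int := \sum_(a <- s | ~~ is_rev a) arc_rhs b a.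
Definition rev_rhs s : int := \sum_(a <- s | is_rev a) arc_rhs b a.

Lemma rev_bE s : rev_b b s = rev_rhs s.
Proof. by rewrite /rev_rhs big_mkcond; apply: eq_bigr => -[]. Qed.

Lemma t_gammaE s : t_gamma b s = fwd_rhs s - rev_rhs s.
Proof.
rewrite /t_gamma (bigID (@is_rev m n)) /= addrC -sumrN.
by congr (_ + _); apply: eq_bigr => -[].
Qed.

Lemma load_circuit s y : circuit l k s ->
  fwd_load s y - rev_load s y = (wind k s)%:~R * \sum_j y j 0.
Proof.
move=> sc; rewrite -(arc_delta_circuit n_gt0 sc (partial_sum_qperiodic n_gt0 y)).
rewrite (bigID (@is_rev m n)) /= addrC /fwd_load /rev_load -sumrN.
congr (_ + _); apply: eq_bigr => a.
all: rewrite /arc_delta (arc_incr_jumped l n_gt0 (circular_k_le A_circular) a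
  (partial_sum_qperiodic n_gt0 y)) diff_col_partial_sum.
all: by case: is_rev.
Qed.

Lemma rhs_le_load s y : inQ A b y ->
  (fwd_rhs s)%:~R <= fwd_load s y /\ (rev_rhs s)%:~R <= rev_load s y.
Proof.
move/(inQP b A_circular) => Ay.
by split; rewrite rmorph_sum; apply: ler_sum => a _; apply: Ay.
Qed.

Lemma gamma_lhsE s y (r : int) :
  \sum_j ((pminus l k s j)%:Z + r)%:~R * y j 0 = rev_load s y + r%:~R * \sum_j y j 0.
Proof.
under eq_bigr do rewrite rmorphD /= mulrDl -pmulrn.
rewrite big_split /= -mulr_sumr; congr (_ + _).
rewrite /pminus; under eq_bigr do rewrite -sum1_count natr_sum mulr_suml big_mkcondr.
rewrite exchange_big /= /rev_load /jumped_sum.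
under [RHS]eq_bigr do rewrite big_mkcond.
by apply/eq_bigr => a _; apply/eq_bigr => j _; case: jumps; rewrite ?mul1r.
Qed.

Lemma beta_gamma_bounds s : (0 < wind k s)%R ->
  (beta_gamma k b s * wind k s <= t_gamma b s < (beta_gamma k b s + 1) * wind k s)%R.
Proof.
move=> p_gt0; have p_gt0' : (0 : rat) < (wind k s)%:~R by rewrite ltr0z.
have /andP[lo hi] := floor_itv ((t_gamma b s)%:~R / (wind k s)%:~R : rat).
rewrite ler_pdivlMr // -rmorphM ler_int in lo.
by rewrite ltr_pdivrMr // -rmorphM ltr_int in hi; rewrite lo hi.
Qed.

Lemma gamma_ineq_valid s y : inQ A b y -> is_int_vec y -> circuit l k s ->
  (2 <= wind k s)%R -> gamma_ineq l k b s y.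
Proof.
move=> Ay y_int sc p_ge2; have [fwd_le rev_le] := rhs_le_load s Ay.
have [T sumT] : exists T : int, \sum_j y j 0 = T%:~R.
  exists (\sum_j Num.floor (y j 0)); rewrite rmorph_sum; apply: eq_bigr => j _.
  by have [z ->] := y_int j; rewrite intrKfloor.
have p_gt0 : (0 < wind k s)%R by lia.
have /andP[lo hi] := beta_gamma_bounds p_gt0.
rewrite /gamma_ineq gamma_lhsE sumT /r_gamma rev_bE.
move: (t_gamma b s) (wind k s) (beta_gamma k b s) (t_gammaE s) (load_circuit y sc) lo hi.
move=> t p beta tE; rewrite sumT => FS lo hi.
rewrite rmorphD rmorphM !rmorphB !rmorphM rmorphD rmorph1 /=.
apply: (gamma_valid_arith FS fwd_le rev_le); first by rewrite tE rmorphB.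
  by rewrite -[1]/(1%:~R) -!rmorphD -!rmorphM ler_int ltr_int lo.
by rewrite -[1]/(1%:~R) -rmorphD !ler_int; case: (lerP T beta) => ?; [left|right; rewrite lezD1].
Qed.

Lemma gamma_ineq_middle s x (T0 : int) (lam : R) :
  circuit l k s -> \sum_j x j 0 = T0%:~R + lam ->
  ((2 <= wind k s)%R -> ~~ (wind k s %| t_gamma b s)%Z -> gamma_ineq l k b s x) ->
  (T0 * wind k s < t_gamma b s < (T0 + 1) * wind k s)%R ->
  ((t_gamma b s - T0 * wind k s) * (T0 + 1) + rev_rhs s)%:~R
    <= rev_load s x + (t_gamma b s - T0 * wind k s)%:~R * (T0%:~R + lam).
Proof.
move=> sc sumx gamma /andP[lo hi].
have betaE : beta_gamma k b s = T0.
  have p_gt0 : (0 : rat) < (wind k s)%:~R by rewrite ltr0z; nia.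
  apply: floor_def; rewrite ler_pdivlMr // ltr_pdivrMr // -!rmorphM ler_int ltr_int.
  by rewrite (ltW lo) hi.
have p_ge2 : (2 <= wind k s)%R.
  rewrite leNgt; apply/negP => p_lt2; have p1 : wind k s = 1 by nia.
  by move: lo hi; rewrite p1; lia.
have p_ndvd : ~~ (wind k s %| t_gamma b s)%Z.
  apply/negP => /dvdzP[c tE]; have p_gt0 : (0 < wind k s)%R by lia.
  by move: lo hi; rewrite tE !ltr_pM2r //; lia.
by have := gamma p_ge2 p_ndvd; rewrite /gamma_ineq gamma_lhsE sumx /r_gamma betaE rev_bE.
Qed.

Lemma circuit_split_bound s x (T0 : int) (lam : R) : inQ A b x -> circuit l k s ->
  \sum_j x j 0 = T0%:~R + lam -> 0 <= lam < 1 ->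
  ((2 <= wind k s)%R -> ~~ (wind k s %| t_gamma b s)%Z -> gamma_ineq l k b s x) ->
  lam * (rev_rhs s)%:~R - rev_load s x + (1 - lam) * (fwd_rhs s)%:~R
    <= (wind k s)%:~R * ((1 - lam) * T0%:~R).
Proof.
move=> Ax sc sumx lam01 gamma; have [fwd_le rev_le] := rhs_le_load s Ax.
have FS := load_circuit x sc; rewrite sumx in FS.
apply: (circuit_split_arith FS lam01 fwd_le rev_le (t := (t_gamma b s)%:~R)).
  by rewrite t_gammaE rmorphB.
move=> /andP[lo hi]; have mid : (T0 * wind k s < t_gamma b s < (T0 + 1) * wind k s)%R.
  by rewrite -!(ltr_int R) !rmorphM rmorphD rmorph1 /= lo hi.
have := gamma_ineq_middle sc sumx gamma mid.
by rewrite rmorphD rmorphM !rmorphB !rmorphM rmorphD rmorph1 /=.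
Qed.

End Gamma.

Section Decomposition.
Variables (R : realType) (m n : nat) (A : 'M[R]_(m, n)).
Variables (l : 'I_m -> 'I_n) (k : 'I_m -> nat) (b : 'I_m -> nat).
Hypothesis n_gt0 : (0 < n)%N.
Hypothesis A_circular : is_circular l k A.
Implicit Types (x : 'cV[R]_n) (lam : R).

(* Lower bounds for the increments of the partial sums u of (1 - lam) z: forward arcs
   express z in Q(A,b), reverse arcs express w = (partial_sum x - u) / lam in Q(A,b). *)
Definition split_weight x lam (a : darc m n) : R :=
  if is_rev a then lam * (arc_rhs b a)%:~R + arc_delta l k (partial_sum n_gt0 x) a
  else (1 - lam) * (arc_rhs b a)%:~R.

Lemma split_weight_circuit x lam s : \sum_(a <- s) split_weight x lam a =
  lam * (rev_rhs b s)%:~R - rev_load l k s x + (1 - lam) * (fwd_rhs b s)%:~R.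
Proof.
rewrite (bigID (@is_rev m n)) /= /rev_rhs /fwd_rhs /rev_load !rmorph_sum !mulr_sumr.
rewrite -sumrB; congr (_ + _); apply: eq_bigr => a ra; rewrite /split_weight ?(negbTE ra) //.
rewrite ra /arc_delta ra (arc_incr_jumped l n_gt0 (circular_k_le A_circular) a
  (partial_sum_qperiodic n_gt0 x)).
by rewrite diff_col_partial_sum.
Qed.

Lemma split_weight_bounds x lam u : (forall a, split_weight x lam a <= arc_delta l k u a) ->
  forall a, (1 - lam) * (arc_rhs b a)%:~R <= arc_incr l k u a /\
    lam * (arc_rhs b a)%:~R <= arc_incr l k (partial_sum n_gt0 x) a - arc_incr l k u a.
Proof.
move=> u_ge [i|j|i|j];
  [move: (u_ge (FRow n i)) (u_ge (RRow n i)) | move: (u_ge (FShort m j)) (u_ge (RShort m j))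
  |move: (u_ge (FRow n i)) (u_ge (RRow n i)) | move: (u_ge (FShort m j)) (u_ge (RShort m j))].
all: by rewrite /split_weight /arc_delta /arc_incr /arc_hi /arc_lo /arc_span /= => ? ?; split; lra.
Qed.

Lemma inQstar_of_split x (T0 : int) lam (u : nat -> R) :
  \sum_j x j 0 = T0%:~R + lam -> 0 < lam < 1 -> qperiodic n u ((1 - lam) * T0%:~R) ->
  (forall a, split_weight x lam a <= arc_delta l k u a) -> inQstar A b x.
Proof.
move=> sumx /andP[lam_gt0 lam_lt1] uP /split_weight_bounds bounds.
have lam_neq0 : lam != 0 by rewrite gt_eqF.
have lam1_neq0 : 1 - lam != 0 by rewrite subr_eq0 eq_sym lt_eqF.
pose g := partial_sum n_gt0 x.
have gP := partial_sum_qperiodic n_gt0 x; rewrite sumx in gP.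
have z_adm : admissible l k b (fun z => u z / (1 - lam)) T0.
  split=> [z|a]; first by rewrite uP; field.
  rewrite /arc_incr -mulrBl ler_pdivlMr ?subr_gt0 // mulrC; exact: (bounds a).1.
have w_adm : admissible l k b (fun z => (g z - u z) / lam) (T0 + 1).
  split=> [z|a]; first by rewrite /g gP uP rmorphD /=; field.
  rewrite /arc_incr -mulrBl ler_pdivlMr // mulrC.
  by have := (bounds a).2; rewrite /arc_incr /g; lra.
have -> : x = (1 - lam) *: diff_col n (fun z => u z / (1 - lam))
    + lam *: diff_col n (fun z => (g z - u z) / lam).
  rewrite -{1}(diff_col_partial_sum n_gt0 x) -diff_col_combine.
  by apply: eq_diff_col => z; rewrite /g; field; rewrite lam_neq0.
apply: (conv_hull_segment (mu := lam)).
- exact: admissible_inQstar z_adm.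
- exact: admissible_inQstar w_adm.
- by rewrite !ltW.
Qed.

Lemma gamma_ineqs_inQstar x : inQ A b x ->
  (forall s, circuit l k s -> (2 <= wind k s)%R -> ~~ (wind k s %| t_gamma b s)%Z ->
     gamma_ineq l k b s x) ->
  inQstar A b x.
Proof.
move=> Ax gamma; pose T0 := Num.floor (\sum_j x j 0); pose lam := frac (\sum_j x j 0).
have sumx : \sum_j x j 0 = T0%:~R + lam by rewrite /lam /frac addrC subrK.
have [lam0|lam_neq0] := eqVneq lam 0.
  rewrite -(diff_col_partial_sum n_gt0 x); apply: (admissible_inQstar n_gt0 A_circular).
  by apply: (partial_sum_admissible n_gt0 A_circular Ax); rewrite sumx lam0 addr0.
have lam_gt0 : 0 < lam by rewrite lt0r lam_neq0 frac_ge0.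
have [u [uP u_ge]] : exists u, qperiodic n u ((1 - lam) * T0%:~R) /\
    forall a, split_weight x lam a <= arc_delta l k u a.
  apply: (qperiodic_lower_bound n_gt0) => s sc; rewrite split_weight_circuit.
  apply: (circuit_split_bound n_gt0 A_circular Ax sc sumx _ (gamma s sc)).
  by rewrite (ltW lam_gt0) frac_lt1.
by apply: (inQstar_of_split sumx _ uP u_ge); rewrite lam_gt0 frac_lt1.
Qed.

End Decomposition.

Lemma no_arc_dim0 (R : realType) m (A : 'M[R]_(m, 0)) l k :
  is_circular l k A -> darc m 0 -> False.
Proof.
move=> A_circular a; have [i|j] : 'I_m + 'I_0 by case: a => ?; [left|right|left|right].
  by have [/andP[]] := A_circular i; lia.
by case: j => j; rewrite ltn0.
Qed.

Theorem theorem4p8 (R : realType) (m n : nat) (A : 'M[R]_(m, n))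
    (l : 'I_m -> 'I_n) (k : 'I_m -> nat) (b : 'I_m -> nat) :
  is_circular l k A ->
  forall x : 'cV[R]_n,
    inQstar A b x <->
    (inQ A b x /\
     forall s : seq (darc m n),
       circuit l k s -> 2 <= wind k s -> ~~ (wind k s %| t_gamma b s)%Z ->
       gamma_ineq l k b s x).
Proof.
move=> A_circular x; have [n0|n_gt0] := posnP n.
  subst n; split=> [Ax|[Ax _]]; last by apply: conv_hull_point; split=> // -[].
  split=> [|[|a s] [] //]; first exact: inQstar_inQ.
  by case: (no_arc_dim0 A_circular a).
split=> [Ax|[Ax gamma]]; last exact: gamma_ineqs_inQstar.
split=> [|s sc p_ge2 _]; first exact: inQstar_inQ.
apply: (conv_hull_ineq Ax) => y [Ay y_int].
exact: gamma_ineq_valid.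
Qed.
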